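(* There exists a sequence of series-parallel weighted graphs $\{W_n\}_{n=1}^\infty$ such that (1) for each $n$ the underlying unweighted graph of $W_n$ contains the diamond $D_n$ as a subgraph, and (2) there exist $C<\infty$ and maps $f_n:V(W_n)\to\ell_2$ such that each $f_n$ is a bilipschitz embedding of $V(W_n)$ (with its weighted shortest path metric) with distortion at most $C$.
   Context: A weighted graph (positive edge weights) is series-parallel if it can be obtained as follows: start with an edge; in each step add a new vertex and join it to both end vertices of an already existing edge; at the end remove an arbitrary set of edges. A weighted graph is considered as the metric space on its vertices with the weighted shortest path distance. Diamonds: $D_0$ is an edge; $D_i$ is obtained from $D_{i-1}$ by replacing each edge $uv$ by a quadrilateral $u,a,v,b$. The distortion of a bilipschitz map $f$ is $\mathrm{Lip}(f)\cdot\mathrm{Lip}(f^{-1})$. *)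

From Stdlib Require Import Reals List.
Import ListNotations.
Open Scope R_scope.

(* A weighted graph: vertices are natural numbers satisfying [vert];
   [edge] is the (undirected) adjacency relation; [wt x y] is the weight
   of the edge xy (only meaningful on edges). *)
Record wgraph := WGraph {
  vert : nat -> Prop;
  edge : nat -> nat -> Prop;
  wt : nat -> nat -> R }.

Definition wgraph_wf (G : wgraph) : Prop :=
  (forall x y, edge G x y -> edge G y x) /\
  (forall x y, edge G x y -> vert G x /\ vert G y) /\
  (forall x y, edge G x y -> 0 < wt G x y /\ wt G x y = wt G y x).

Inductive sp_build : (nat -> Prop) -> (nat -> nat -> Prop) -> Prop :=
| spb_edge (a b : nat) : a <> b ->
    sp_build (fun x => x = a \/ x = b)
             (fun x y => (x = a /\ y = b) \/ (x = b /\ y = a))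
| spb_add (V : nat -> Prop) (E : nat -> nat -> Prop) (u v c : nat) :
    sp_build V E -> E u v -> ~ V c ->
    sp_build (fun x => V x \/ x = c)
             (fun x y => E x y \/ (x = c /\ (y = u \/ y = v))
                               \/ (y = c /\ (x = u \/ x = v))).

(* Series-parallel weighted graph: obtained from such a construction by
   removing an arbitrary set of edges (weights arbitrary positive). *)
Definition series_parallel (G : wgraph) : Prop :=
  wgraph_wf G /\
  exists (V : nat -> Prop) (E : nat -> nat -> Prop),
    sp_build V E /\ (forall x, vert G x <-> V x) /\
    (forall x y, edge G x y -> E x y).

Inductive walk_len (G : wgraph) : nat -> nat -> R -> Prop :=
| wl_nil (x : nat) : vert G x -> walk_len G x x 0
| wl_cons (x z y : nat) (d : R) :
    edge G x z -> walk_len G z y d -> walk_len G x y (wt G x z + d).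

(* Connectedness (needed for the shortest-path metric to be a metric). *)
Definition connected (G : wgraph) : Prop :=
  forall x y, vert G x -> vert G y -> exists d, walk_len G x y d.

Definition is_dist (G : wgraph) (x y : nat) (d : R) : Prop :=
  walk_len G x y d /\ forall d', walk_len G x y d' -> d <= d'.

(* Diamond graphs: (number of vertices N, edge list); vertices 0..N-1.
   D_0 is the edge 01; D_{i} replaces each edge uv of D_{i-1} by the
   quadrilateral u,a,v,b with fresh vertices a,b. *)
Fixpoint subdiv (N : nat) (es : list (nat * nat)) : list (nat * nat) :=
  match es with
  | [] => []
  | (u, v) :: t =>
      (u, N) :: (N, v) :: (u, S N) :: (S N, v) :: subdiv (S (S N)) t
  end.

Fixpoint diamond (n : nat) : nat * list (nat * nat) :=
  match n with
  | O => (2%nat, [(0%nat, 1%nat)])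
  | S m => let (N, es) := diamond m in
           (N + 2 * length es, subdiv N es)%nat
  end.

Definition contains_diamond (G : wgraph) (n : nat) : Prop :=
  let (N, es) := diamond n in
  exists phi : nat -> nat,
    (forall i j, (i < N)%nat -> (j < N)%nat -> phi i = phi j -> i = j) /\
    (forall i, (i < N)%nat -> vert G (phi i)) /\
    (forall u v, In (u, v) es -> edge G (phi u) (phi v)).

Definition in_l2 (x : nat -> R) : Prop :=
  exists L, infinite_sum (fun i => (x i) ^ 2) L.

Definition l2_dist (x y : nat -> R) (r : R) : Prop :=
  0 <= r /\ infinite_sum (fun i => (x i - y i) ^ 2) (r ^ 2).

(* f : V(G) -> l_2 is a bilipschitz embedding of (V(G), shortest path metric)
   with distortion Lip(f) * Lip(f^{-1}) <= C: there are constants B >= Lip(f)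
   and A >= Lip(f^{-1}) with A * B <= C. *)
Definition distortion_le (G : wgraph) (f : nat -> nat -> R) (C : R) : Prop :=
  (forall v, vert G v -> in_l2 (f v)) /\
  exists A B : R, 0 < A /\ 0 < B /\ A * B <= C /\
    forall x y d, vert G x -> vert G y -> is_dist G x y d ->
      exists r, l2_dist (f x) (f y) r /\ r <= B * d /\ d <= A * r.

From Stdlib Require Import Reals List Lra Lia Psatz.
Open Scope R_scope.

(* Let W_n live on the vertices 0..N-1 of the diamond D_n and
   have as edges every edge ever created in the construction D_0, D_1, ..., D_n.
   Creating the vertices of D_n one by one, each joined to both ends of an
   existing edge, is exactly the series-parallel construction, and D_n is a
   subgraph of W_n via the identity map.  Give the edge xy the weight
   2^(max x y).  Every vertex x >= 1 is joined to a smaller vertex, so x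
   reaches the root 0 within 2 * 2^x, while any walk leaving x (or ending at y)
   costs at least 2^x (resp. 2^y).  Hence for x <> y
       max(2^x, 2^y) <= d(x,y) <= 2 (2^x + 2^y),
   and the map x |-> 2^x e_x into l_2, whose distances are
   sqrt(4^x + 4^y), has distortion at most 2 * 4 = 8 for every n. *)

Definition dsize (n : nat) : nat := fst (diamond n).
Definition dedges (n : nat) : list (nat * nat) := snd (diamond n).

Lemma dsize_S (m : nat) : dsize (S m) = (dsize m + 2 * length (dedges m))%nat.
Proof. unfold dsize, dedges; simpl; destruct (diamond m); reflexivity. Qed.

Lemma dedges_S (m : nat) : dedges (S m) = subdiv (dsize m) (dedges m).
Proof. unfold dsize, dedges; simpl; destruct (diamond m); reflexivity. Qed.

Lemma dsize_ge2 (n : nat) : (2 <= dsize n)%nat.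
Proof. induction n; [unfold dsize; simpl; lia | rewrite dsize_S; lia]. Qed.

Lemma subdiv_bound (es : list (nat * nat)) (N : nat) :
  (forall u v, In (u, v) es -> (u < N /\ v < N)%nat) ->
  forall u v, In (u, v) (subdiv N es) ->
    (u < N + 2 * length es /\ v < N + 2 * length es)%nat.
Proof.
  revert N; induction es as [|[a b] t IH]; intros N Hes u v Hin; simpl in *.
  - contradiction.
  - pose proof (Hes a b (or_introl eq_refl)).
    destruct Hin as [E|[E|[E|[E|E]]]]; try (injection E; intros; subst; lia).
    assert (Ht : forall u v, In (u, v) t -> (u < S (S N) /\ v < S (S N))%nat)
      by (intros u' v' Hi; specialize (Hes u' v' (or_intror Hi)); lia).
    specialize (IH _ Ht u v E); lia.
Qed.

Lemma subdiv_fresh_parent (es : list (nat * nat)) (K N : nat) :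
  (forall u v, In (u, v) es -> (u < K /\ v < K)%nat) -> (K <= N)%nat ->
  forall x, (N <= x < N + 2 * length es)%nat ->
    exists u, (u < K)%nat /\ In (u, x) (subdiv N es).
Proof.
  revert N; induction es as [|[a b] t IH]; intros N Hes HK x Hx; simpl in *; [lia|].
  pose proof (Hes a b (or_introl eq_refl)).
  destruct (Nat.eq_dec x N) as [->|Hn]; [exists a; split; [lia|now left]|].
  destruct (Nat.eq_dec x (S N)) as [->|Hn'];
    [exists a; split; [lia|right; right; now left]|].
  destruct (IH (S (S N)) (fun u v Hi => Hes u v (or_intror Hi)) ltac:(lia) x)
    as [u [Hu Hi]]; [lia|].
  exists u; split; [exact Hu | do 4 right; exact Hi].
Qed.

Lemma dedges_bound (n : nat) :
  forall u v, In (u, v) (dedges n) -> (u < dsize n /\ v < dsize n)%nat.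
Proof.
  induction n as [|m IH]; intros u v Hi.
  - destruct Hi as [E|[]]; injection E; intros; subst; unfold dsize; simpl; lia.
  - rewrite dedges_S in Hi; rewrite dsize_S; exact (subdiv_bound _ _ IH u v Hi).
Qed.

Fixpoint cum_edges (n : nat) : list (nat * nat) :=
  match n with O => dedges 0 | S m => cum_edges m ++ dedges (S m) end.

Lemma dedges_in_cum (n : nat) (p : nat * nat) : In p (dedges n) -> In p (cum_edges n).
Proof. destruct n; simpl; [auto | intro; apply in_or_app; right; auto]. Qed.

Lemma cum_edges_bound (n : nat) :
  forall u v, In (u, v) (cum_edges n) -> (u < dsize n /\ v < dsize n)%nat.
Proof.
  induction n as [|m IH]; intros u v Hi; [exact (dedges_bound 0 u v Hi)|].
  simpl in Hi; apply in_app_or in Hi; destruct Hi as [Hi|Hi].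
  - specialize (IH u v Hi); rewrite dsize_S; lia.
  - exact (dedges_bound _ u v Hi).
Qed.

Lemma cum_edges_parent (n x : nat) :
  (1 <= x < dsize n)%nat -> exists u, (u < x)%nat /\ In (u, x) (cum_edges n).
Proof.
  induction n as [|m IH]; intros Hx.
  - unfold dsize in Hx; simpl in Hx; replace x with 1%nat by lia.
    exists 0%nat; split; [lia | now left].
  - simpl; destruct (Nat.lt_ge_cases x (dsize m)) as [Hl|Hg].
    + destruct (IH ltac:(lia)) as [u [Hu Hi]].
      exists u; split; [exact Hu | apply in_or_app; now left].
    + rewrite dsize_S in Hx.
      destruct (subdiv_fresh_parent _ _ _ (dedges_bound m) (le_n _) x ltac:(lia)) as [u [Hu Hi]].
      exists u; split; [lia | apply in_or_app; right; rewrite dedges_S; exact Hi].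
Qed.

Lemma sp_build_sym (V : nat -> Prop) (E : nat -> nat -> Prop) :
  sp_build V E -> forall x y, E x y -> E y x.
Proof. induction 1; intros x y H'; firstorder. Qed.

Lemma subdiv_build (es : list (nat * nat)) (N : nat) (V : nat -> Prop) (E : nat -> nat -> Prop) :
  sp_build V E -> (forall x, V x <-> (x < N)%nat) -> (forall u v, In (u, v) es -> E u v) ->
  exists V' E', sp_build V' E' /\ (forall x, V' x <-> (x < N + 2 * length es)%nat) /\
    (forall u v, E u v -> E' u v) /\ (forall u v, In (u, v) (subdiv N es) -> E' u v).
Proof.
  revert N V E; induction es as [|[a b] t IH]; intros N V E HB HV HE.
  - exists V, E; split; [exact HB|]; split; [intros x; rewrite HV; simpl; lia|].
    split; [auto | simpl; tauto].
  - assert (Hab : E a b) by (apply HE; now left).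
    pose proof (spb_add V E a b N HB Hab ltac:(rewrite HV; lia)) as HB1.
    match type of HB1 with sp_build ?V1 ?E1 =>
      pose proof (spb_add V1 E1 a b (S N) HB1 (or_introl Hab)
                    ltac:(simpl; rewrite HV; lia)) as HB2 end.
    match type of HB2 with sp_build ?V2 ?E2 =>
      destruct (IH (S (S N)) V2 E2 HB2 ltac:(intros x; simpl; rewrite HV; lia)
                  (fun u v Hi => or_introl (or_introl (HE u v (or_intror Hi)))))
        as [V' [E' [HB' [HV' [Hold Hnew]]]]] end.
    exists V', E'; split; [exact HB'|]; split; [intros x; rewrite HV'; simpl; lia|].
    split; [intros u v H; apply Hold; left; left; exact H|].
    intros u v Hi; simpl in Hi.
    destruct Hi as [Hi|[Hi|[Hi|[Hi|Hi]]]];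
      try (injection Hi; intros; subst; apply Hold); [| | | | now apply Hnew].
    + left; right; right; split; [reflexivity | now left].
    + left; right; left; split; [reflexivity | now right].
    + right; right; split; [reflexivity | now left].
    + right; left; split; [reflexivity | now right].
Qed.

Lemma cum_edges_build (n : nat) :
  exists V E, sp_build V E /\ (forall x, V x <-> (x < dsize n)%nat) /\
    (forall u v, In (u, v) (cum_edges n) -> E u v).
Proof.
  induction n as [|m [V [E [HB [HV HE]]]]].
  - exists (fun x => x = 0%nat \/ x = 1%nat),
      (fun x y => (x = 0%nat /\ y = 1%nat) \/ (x = 1%nat /\ y = 0%nat)).
    split; [apply spb_edge; lia|]; split; [intros x; unfold dsize; simpl; lia|].
    intros u v [Hi|[]]; injection Hi; intros; subst; now left.
  - destruct (subdiv_build (dedges m) (dsize m) V E HB HV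
                (fun u v Hi => HE u v (dedges_in_cum _ _ Hi)))
      as [V' [E' [HB' [HV' [Hold Hnew]]]]].
    exists V', E'; split; [exact HB'|]; split; [intros x; rewrite HV', dsize_S; lia|].
    intros u v Hi; simpl in Hi; apply in_app_or in Hi; destruct Hi as [Hi|Hi].
    + apply Hold, HE, Hi.
    + rewrite dedges_S in Hi; apply Hnew, Hi.
Qed.

Lemma walk_app (G : wgraph) (x z y : nat) (d1 d2 : R) :
  walk_len G x z d1 -> walk_len G z y d2 -> walk_len G x y (d1 + d2).
Proof.
  induction 1 as [x Hx|x w z' d Hxw Hw IH]; intros H2.
  - now rewrite Rplus_0_l.
  - rewrite Rplus_assoc; apply wl_cons; auto.
Qed.

Lemma walk_rev (G : wgraph) (x y : nat) (d : R) :
  wgraph_wf G -> walk_len G x y d -> walk_len G y x d.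
Proof.
  intros [Hsym [Hvert Hwt]].
  induction 1 as [x Hx|x z y d Hxz Hw IH]; [now apply wl_nil|].
  replace (wt G x z + d) with (d + (wt G z x + 0)) by (rewrite (proj2 (Hwt _ _ Hxz)); ring).
  apply walk_app with z; [exact IH|].
  apply wl_cons; [now apply Hsym | apply wl_nil; exact (proj1 (Hvert _ _ Hxz))].
Qed.

Definition Wg (n : nat) : wgraph :=
  WGraph (fun x => (x < dsize n)%nat)
         (fun x y => In (x, y) (cum_edges n) \/ In (y, x) (cum_edges n))
         (fun x y => 2 ^ Nat.max x y).

Lemma pow2_pos (k : nat) : 0 < 2 ^ k.
Proof. apply pow_lt; lra. Qed.

Lemma pow2_le (a b : nat) : (a <= b)%nat -> 2 ^ a <= 2 ^ b.
Proof. intro; apply Rle_pow; [lra | assumption]. Qed.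

Lemma Wg_wf (n : nat) : wgraph_wf (Wg n).
Proof.
  split; [simpl; tauto|]; split.
  - intros x y [H|H]; simpl; destruct (cum_edges_bound n _ _ H); lia.
  - intros x y _; simpl; split; [apply pow2_pos | now rewrite Nat.max_comm].
Qed.

Lemma Wg_series_parallel (n : nat) : series_parallel (Wg n).
Proof.
  split; [apply Wg_wf|].
  destruct (cum_edges_build n) as [V [E [HB [HV HE]]]].
  exists V, E; split; [exact HB|]; split; [intros x; simpl; rewrite HV; tauto|].
  intros x y [H|H]; [now apply HE | apply (sp_build_sym V E HB); now apply HE].
Qed.

Lemma Wg_contains_diamond (n : nat) : contains_diamond (Wg n) n.
Proof.
  unfold contains_diamond.
  assert (Hdes : forall p, In p (dedges n) -> In p (cum_edges n)) by apply dedges_in_cum.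
  assert (HN : dsize n = fst (diamond n)) by reflexivity.
  unfold dedges in Hdes; destruct (diamond n) as [N es]; simpl in Hdes, HN.
  exists (fun i => i); split; [auto|]; split; [simpl; intros i Hi; lia|].
  intros u v Hi; simpl; left; apply Hdes, Hi.
Qed.

(* Lower bound: a walk between distinct vertices x, y uses an edge at x and
   an edge at y, so it costs at least 2^x and at least 2^y. *)
Lemma Wg_walk_lower (n x y : nat) (d : R) :
  walk_len (Wg n) x y d -> 0 <= d /\ (x <> y -> 2 ^ x <= d /\ 2 ^ y <= d).
Proof.
  induction 1 as [x Hx|x z y d Hxz Hw [Hd0 IH]]; simpl; [split; [lra | tauto]|].
  pose proof (pow2_pos (Nat.max x z)); split; [lra|]; intros Hxy; split.
  - pose proof (pow2_le x (Nat.max x z) (Nat.le_max_l _ _)); lra.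
  - destruct (Nat.eq_dec z y) as [<-|Hzy].
    + pose proof (pow2_le z (Nat.max x z) (Nat.le_max_r _ _)); lra.
    + destruct (IH Hzy); lra.
Qed.

(* Upper bound: following parent edges down to the root 0, the weights
   2^x, 2^u, ... decrease at least geometrically, so the cost is <= 2 * 2^x. *)
Lemma Wg_walk_to_root (n x : nat) :
  (x < dsize n)%nat -> exists d, walk_len (Wg n) x 0 d /\ d <= 2 * 2 ^ x.
Proof.
  induction x as [x IH] using (well_founded_induction Wf_nat.lt_wf); intros Hx.
  destruct (Nat.eq_dec x 0) as [->|Hx0].
  - exists 0; split; [apply wl_nil; simpl; pose proof (dsize_ge2 n); lia | simpl; lra].
  - destruct (cum_edges_parent n x ltac:(lia)) as [u [Hu Hi]].
    destruct (IH u Hu ltac:(lia)) as [d [Hw Hd]].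
    exists (wt (Wg n) x u + d); split; [apply wl_cons; [simpl; now right | exact Hw]|].
    simpl; rewrite Nat.max_l by lia.
    pose proof (pow2_le (S u) x Hu); simpl in *; lra.
Qed.

Lemma Wg_walk_via_root (n x y : nat) :
  vert (Wg n) x -> vert (Wg n) y ->
  exists d, walk_len (Wg n) x y d /\ d <= 2 * 2 ^ x + 2 * 2 ^ y.
Proof.
  intros Hx Hy.
  destruct (Wg_walk_to_root n x Hx) as [d1 [H1 Hd1]].
  destruct (Wg_walk_to_root n y Hy) as [d2 [H2 Hd2]].
  exists (d1 + d2); split; [|lra].
  apply walk_app with 0%nat; [exact H1 | exact (walk_rev _ _ _ _ (Wg_wf n) H2)].
Qed.

Lemma Wg_connected (n : nat) : connected (Wg n).
Proof.
  intros x y Hx Hy; destruct (Wg_walk_via_root n x y Hx Hy) as [d [Hw _]]; now exists d.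
Qed.

Lemma Wg_dist_bounds (n x y : nat) (d : R) :
  vert (Wg n) x -> vert (Wg n) y -> is_dist (Wg n) x y d -> x <> y ->
  2 ^ x <= d /\ 2 ^ y <= d /\ d <= 2 * 2 ^ x + 2 * 2 ^ y.
Proof.
  intros Hx Hy [Hw Hmin] Hxy.
  destruct (Wg_walk_lower n x y d Hw) as [_ [Ha Hb]]; [exact Hxy|].
  destruct (Wg_walk_via_root n x y Hx Hy) as [d' [Hw' Hd']].
  pose proof (Hmin d' Hw'); repeat split; lra.
Qed.

Definition point_mass (a : R) (x i : nat) : R := if Nat.eq_dec i x then a else 0.

Lemma sum_point_mass (a : R) (x n : nat) : (x <= n)%nat -> sum_f_R0 (point_mass a x) n = a.
Proof.
  assert (Hbelow : forall m, (m < x)%nat -> sum_f_R0 (point_mass a x) m = 0).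
  { induction m; intros Hm; simpl; unfold point_mass.
    - destruct (Nat.eq_dec 0 x); [lia | reflexivity].
    - fold (point_mass a x); rewrite IHm by lia; destruct (Nat.eq_dec (S m) x); [lia | ring]. }
  induction n; intros Hn; simpl.
  - replace x with 0%nat by lia; unfold point_mass; now destruct (Nat.eq_dec 0 0).
  - unfold point_mass at 2; destruct (Nat.eq_dec (S n) x) as [<-|Hne].
    + rewrite Hbelow by lia; ring.
    + rewrite IHn by lia; ring.
Qed.

Lemma infinite_sum_eventually (s : nat -> R) (l : R) (M : nat) :
  (forall n, (M <= n)%nat -> sum_f_R0 s n = l) -> infinite_sum s l.
Proof.
  intros H eps Heps; exists M; intros n Hn.
  rewrite H by lia; rewrite Rdist_eq; exact Heps.
Qed.

Definition femb (x : nat) : nat -> R := point_mass (2 ^ x) x.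

Lemma femb_l2 (x : nat) : in_l2 (femb x).
Proof.
  exists ((2 ^ x) ^ 2); apply infinite_sum_eventually with x; intros n Hn.
  rewrite <- (sum_point_mass ((2 ^ x) ^ 2) x n Hn); apply sum_eq; intros i _.
  unfold femb, point_mass; destruct (Nat.eq_dec i x); ring.
Qed.

Lemma femb_dist_self (x : nat) : l2_dist (femb x) (femb x) 0.
Proof.
  split; [lra|]; apply infinite_sum_eventually with 0%nat; intros n _.
  rewrite <- (sum_point_mass (0 ^ 2) 0 n) by lia; apply sum_eq; intros i _.
  unfold point_mass; destruct (Nat.eq_dec i 0); ring.
Qed.

(* Images of distinct vertices lie on orthogonal axes. *)
Lemma femb_dist (x y : nat) : x <> y ->
  exists r, l2_dist (femb x) (femb y) r /\ r ^ 2 = (2 ^ x) ^ 2 + (2 ^ y) ^ 2.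
Proof.
  intros Hxy; set (s := (2 ^ x) ^ 2 + (2 ^ y) ^ 2).
  assert (Hr : sqrt s ^ 2 = s) by (rewrite pow2_sqrt; [reflexivity | unfold s; nra]).
  exists (sqrt s); split; [|exact Hr]; split; [apply sqrt_pos|]; rewrite Hr.
  apply infinite_sum_eventually with (Nat.max x y); intros n Hn; unfold s.
  rewrite <- (sum_point_mass ((2 ^ x) ^ 2) x n), <- (sum_point_mass ((2 ^ y) ^ 2) y n),
    <- plus_sum by lia.
  apply sum_eq; intros i _; unfold femb, point_mass.
  destruct (Nat.eq_dec i x), (Nat.eq_dec i y); try lia; ring.
Qed.

Lemma distortion_arith (a b d r : R) :
  0 < a -> 0 < b -> 0 <= r -> r ^ 2 = a ^ 2 + b ^ 2 ->
  a <= d -> b <= d -> d <= 2 * a + 2 * b -> r <= 2 * d /\ d <= 4 * r.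
Proof.
  intros Ha Hb Hr Hr2 Had Hbd Hd.
  assert (ra : a <= r) by nra. assert (rb : b <= r) by nra.
  split; [|lra]. assert (r ^ 2 <= (2 * d) ^ 2) by nra. nra.
Qed.

Lemma femb_distortion (n : nat) : distortion_le (Wg n) femb 8.
Proof.
  split; [intros; apply femb_l2|].
  exists 4, 2; split; [lra|]; split; [lra|]; split; [lra|].
  intros x y d Hx Hy Hdist.
  destruct (Nat.eq_dec x y) as [<-|Hxy].
  - exists 0; split; [apply femb_dist_self|].
    destruct Hdist as [Hw Hmin].
    pose proof (proj1 (Wg_walk_lower n x x d Hw)).
    assert (d <= 0) by (apply Hmin, wl_nil, Hx); lra.
  - destruct (femb_dist x y Hxy) as [r [Hl Hr]]; exists r; split; [exact Hl|].
    destruct (Wg_dist_bounds n x y d Hx Hy Hdist Hxy) as [Ha [Hb Hd]].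
    apply (distortion_arith (2 ^ x) (2 ^ y)); auto using pow2_pos; apply Hl.
Qed.

Theorem theoremT :
  exists W : nat -> wgraph,
    (forall n : nat, (1 <= n)%nat ->
       series_parallel (W n) /\ connected (W n) /\ contains_diamond (W n) n) /\
    exists (C : R) (f : nat -> nat -> nat -> R),
      forall n : nat, (1 <= n)%nat -> distortion_le (W n) (f n) C.
Proof.
  exists Wg; split.
  - intros n _; split; [|split].
    + apply Wg_series_parallel.
    + apply Wg_connected.
    + apply Wg_contains_diamond.
  - exists 8, (fun _ => femb); intros n _; apply femb_distortion.
Qed.
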